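(* Let $t_n=n(\log n)^{3/4}$. Then $$\lambda\Big(\#\{i\le n:\beta_i\ge t_n\}\ge 2\ \text{for infinitely many } n\Big)=0.$$
   Context: Let $\lambda$ be Lebesgue measure on $[0,1)$, $\tau(x)=2x\bmod1$, $\chi(x)=\lfloor1/x\rfloor$, $B=[1/2,1)$, $\phi(x)=\inf\{n\in\mathbb N_0:\tau^nx\in B\}+1$, $\tau_Bx=\tau^{\phi(x)}x$ (defined $\lambda$-a.e.), and $\beta_i=\chi\circ\tau_B^{\,i-1}$. Logarithms are natural. *)

From Stdlib Require Import Reals Lra Lia Classical ClassicalEpsilon.
Open Scope R_scope.

(* Lebesgue-null subsets of R: coverable by countably many open intervals
   of arbitrarily small total length.  lambda(E) = 0 iff E is null. *)
Definition lebesgue_null (E : R -> Prop) : Prop :=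
  forall eps : R, 0 < eps ->
    exists a b : nat -> R,
      (forall k, a k <= b k) /\
      (forall x, E x -> exists k, a k < x < b k) /\
      (forall N, sum_f_R0 (fun k => b k - a k) N <= eps).

Definition tau (x : R) : R := frac_part (2 * x).

Definition chi (x : R) : Z := Int_part (/ x).

Definition B (y : R) : Prop := 1/2 <= y < 1.

(* phi(x) = inf{n >= 0 : tau^n x in B} + 1  (the minimum exists for a.e. x;
   elsewhere an arbitrary value is chosen, on a null set). *)
Definition phi (x : R) : nat :=
  S (epsilon (inhabits 0%nat)
       (fun n => B (Nat.iter n tau x) /\
                 forall m, (m < n)%nat -> ~ B (Nat.iter m tau x))).

Definition tauB (x : R) : R := Nat.iter (phi x) tau x.

Definition beta (i : nat) (x : R) : Z := chi (Nat.iter (i - 1) tauB x).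

Fixpoint count_big (x t : R) (n : nat) : nat :=
  match n with
  | O => O
  | S k => (count_big x t k +
            (if Rle_dec t (IZR (beta (S k) x)) then 1 else 0))%nat
  end.

Definition tn (n : nat) : R := INR n * Rpower (ln (INR n)) (3/4).

From Stdlib Require Import Reals Lra Lia ClassicalEpsilon List.
Open Scope R_scope.

(* The induced map tauB is affine and onto [0,1) on each dyadic branch
   [2^-(j+1), 2^-j), with slope 2^(j+1); hence pulling a finite interval
   cover back through tauB multiplies its total length by at most one, up to
   a small error.  The digit beta_(i+1)(x) = floor(1 / tauB^i x) is at least
   2^M exactly when tauB^i x lies in (0, 2^-M]; by pulling back twice, two
   such visits at times i < j are covered by intervals of total length about
   4^-M, the product of the individual probabilities.

   Group n into dyadic blocks: J = log2 n and s ~ (log2 J)/2.  For n in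
   block (s, J) the threshold t_n exceeds 2^(J + 3s/2), and there are fewer
   than 2^(J+1) times to consider, so the bad event for all such n is
   covered with total length O(2^-(3s)) for each J; summing over the 3 4^s
   values of J gives O(2^-s).  A Borel-Cantelli argument for interval
   covers then shows that the points with bad n in infinitely many blocks
   form a Lebesgue-null set, which is the theorem. *)

Definition dyad (k : nat) : R := / 2 ^ k.

Lemma pow2_pos k : 0 < 2 ^ k.
Proof. apply pow_lt; lra. Qed.

Lemma dyad_pos k : 0 < dyad k.
Proof. unfold dyad; apply Rinv_0_lt_compat, pow2_pos. Qed.

Lemma dyad_0 : dyad 0 = 1.
Proof. unfold dyad; simpl; lra. Qed.

Lemma dyad_S k : dyad (S k) = dyad k / 2.
Proof. unfold dyad; simpl. pose proof (pow2_pos k). field. lra. Qed.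

Lemma dyad_add a b : dyad (a + b) = dyad a * dyad b.
Proof.
  unfold dyad; rewrite pow_add.
  pose proof (pow2_pos a); pose proof (pow2_pos b). field; lra.
Qed.

Lemma pow2_mul_dyad a b : (a <= b)%nat -> 2 ^ a * dyad b = dyad (b - a).
Proof.
  intros Hab. replace b with (a + (b - a))%nat at 1 by lia.
  rewrite dyad_add. unfold dyad at 1. pose proof (pow2_pos a). field. lra.
Qed.

Lemma pow2_mul_dyad_le a b c d :
  (a + d <= b + c)%nat -> 2 ^ a * dyad b <= 2 ^ c * dyad d.
Proof.
  intros H. unfold dyad.
  pose proof (pow2_pos a); pose proof (pow2_pos b);
  pose proof (pow2_pos c); pose proof (pow2_pos d).
  assert (E : 2 ^ (a + d) <= 2 ^ (b + c)) by (apply Rle_pow; [lra|lia]).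
  rewrite !pow_add in E.
  apply (Rmult_le_reg_r (2 ^ b * 2 ^ d)); [nra|].
  replace (2 ^ a * / 2 ^ b * (2 ^ b * 2 ^ d)) with (2 ^ a * 2 ^ d) by (field; lra).
  replace (2 ^ c * / 2 ^ d * (2 ^ b * 2 ^ d)) with (2 ^ b * 2 ^ c) by (field; lra).
  lra.
Qed.

Lemma dyad_le a b : (b <= a)%nat -> dyad a <= dyad b.
Proof.
  intros H. pose proof (pow2_mul_dyad_le 0 a 0 b) as Hle.
  simpl in Hle. rewrite !Rmult_1_l in Hle. apply Hle. lia.
Qed.

Lemma twice_dyad_le_1 M : (1 <= M)%nat -> 2 * dyad M <= 1.
Proof.
  intros HM. replace M with (S (M - 1)) by lia. rewrite dyad_S.
  pose proof (dyad_le (M - 1) 0 ltac:(lia)). rewrite dyad_0 in H. lra.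
Qed.

Lemma INR_pow2 n : INR (2 ^ n) = 2 ^ n.
Proof. rewrite pow_INR. simpl INR. replace (1 + 1) with 2 by lra. reflexivity. Qed.

Lemma exists_dyad_lt y : 0 < y -> exists n, dyad n < y.
Proof.
  intros Hy. destruct (INR_unbounded (/ y)) as [n Hn]. exists n.
  assert (Hpow : INR n <= 2 ^ n).
  { rewrite <- INR_pow2. apply le_INR. apply Nat.lt_le_incl, Nat.pow_gt_lin_r. lia. }
  unfold dyad. rewrite <- (Rinv_inv y).
  apply Rinv_lt_contravar; [|lra].
  apply Rmult_lt_0_compat; [apply Rinv_0_lt_compat; lra | apply pow2_pos].
Qed.

Lemma dyad_geom_sum c s0 : 0 <= c -> forall N,
  sum_f_R0 (fun s => c * dyad (s0 + s)) N <= 2 * c * dyad s0.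
Proof.
  intros Hc.
  assert (G : forall N, sum_f_R0 (fun s => c * dyad (s0 + s)) N
                        = 2 * c * dyad s0 - 2 * c * dyad (s0 + S N)).
  { induction N.
    - simpl. rewrite Nat.add_0_r, Nat.add_1_r, dyad_S. lra.
    - simpl sum_f_R0. rewrite IHN.
      replace (s0 + S (S N))%nat with (S (s0 + S N)) by lia. rewrite dyad_S. lra. }
  intros N. rewrite G. pose proof (dyad_pos (s0 + S N)). nra.
Qed.

(* On the dyadic branch
   [2^-(j+1), 2^-j) the orbit of y under tau stays in [0,1/2) for j steps
   (it is y, 2y, ..., 2^j y) and first enters B at time j, so
   phi y = j+1 and tauB y = 2^(j+1) y - 1: tauB maps every branch affinely
   onto [0,1). *)

Lemma Int_part_eq r z : IZR z <= r < IZR z + 1 -> Int_part r = z.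
Proof.
  intros [H1 H2]. unfold Int_part.
  assert (up r = (z + 1)%Z) as ->.
  { symmetry. apply tech_up; rewrite plus_IZR; simpl; lra. }
  lia.
Qed.

Lemma tau_low y : 0 <= y < / 2 -> tau y = 2 * y.
Proof.
  intros H. unfold tau, frac_part. rewrite (Int_part_eq _ 0); simpl; lra.
Qed.

Lemma tau_high y : / 2 <= y < 1 -> tau y = 2 * y - 1.
Proof.
  intros H. unfold tau, frac_part. rewrite (Int_part_eq _ 1); simpl; lra.
Qed.

Lemma tauB_0 : tauB 0 = 0.
Proof.
  unfold tauB. induction (phi 0) as [|n IH]; simpl; [reflexivity|].
  rewrite IH. rewrite tau_low; lra.
Qed.

Definition in_branch (j : nat) (y : R) : Prop := dyad (S j) <= y < dyad j.

Lemma iter_tau_on_branch j y : in_branch j y ->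
  forall m, (m <= j)%nat -> Nat.iter m tau y = 2 ^ m * y.
Proof.
  intros Hy. induction m as [|m IH]; intros Hm; [simpl; lra|].
  rewrite Nat.iter_succ, IH by lia. rewrite tau_low; [simpl; lra|].
  destruct Hy as [Hlo Hhi]. split.
  - pose proof (pow2_pos m); pose proof (dyad_pos (S j)). nra.
  - assert (Hlt : 2 ^ m * y < 2 ^ m * dyad j)
      by (apply Rmult_lt_compat_l; [apply pow2_pos|lra]).
    rewrite pow2_mul_dyad in Hlt by lia.
    pose proof (dyad_le (j - m) 1 ltac:(lia)). unfold dyad at 2 in H. simpl in H. lra.
Qed.

Lemma branch_avoids_B j y : in_branch j y ->
  forall m, (m < j)%nat -> ~ B (Nat.iter m tau y).
Proof.
  intros Hy m Hm HB. rewrite (iter_tau_on_branch j y Hy m) in HB by lia.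
  destruct Hy as [_ Hhi]. unfold B in HB.
  assert (Hlt : 2 ^ m * y < 2 ^ m * dyad j)
    by (apply Rmult_lt_compat_l; [apply pow2_pos|lra]).
  rewrite pow2_mul_dyad in Hlt by lia.
  pose proof (dyad_le (j - m) 1 ltac:(lia)). unfold dyad at 2 in H. simpl in H. lra.
Qed.

Lemma branch_hits_B j y : in_branch j y -> / 2 <= 2 ^ j * y < 1.
Proof.
  intros [H1 H2]. pose proof (pow2_pos j).
  assert (E1 : 2 ^ j * dyad (S j) = / 2).
  { rewrite pow2_mul_dyad by lia. replace (S j - j)%nat with 1%nat by lia.
    unfold dyad; simpl; lra. }
  assert (E2 : 2 ^ j * dyad j = 1).
  { rewrite pow2_mul_dyad, Nat.sub_diag by lia. apply dyad_0. }
  split; nra.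
Qed.

Lemma phi_on_branch j y : in_branch j y -> phi y = S j.
Proof.
  intros Hy. unfold phi. f_equal.
  set (P := fun n => B (Nat.iter n tau y) /\
                     forall m, (m < n)%nat -> ~ B (Nat.iter m tau y)).
  assert (Pj : P j).
  { split; [|exact (branch_avoids_B j y Hy)].
    unfold B. rewrite (iter_tau_on_branch j y Hy j) by lia.
    pose proof (branch_hits_B j y Hy). lra. }
  assert (HP : P (epsilon (inhabits 0%nat) P))
    by (apply epsilon_spec; exists j; exact Pj).
  destruct HP as [HB Hfirst].
  destruct (Nat.lt_total (epsilon (inhabits 0%nat) P) j) as [Hl|[He|Hg]].
  - exfalso. exact (branch_avoids_B j y Hy _ Hl HB).
  - exact He.
  - exfalso. apply (Hfirst j Hg). apply Pj.
Qed.

Lemma tauB_on_branch j y : in_branch j y -> tauB y = 2 ^ (S j) * y - 1.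
Proof.
  intros Hy. unfold tauB. rewrite (phi_on_branch j y Hy), Nat.iter_succ.
  rewrite (iter_tau_on_branch j y Hy j) by lia.
  rewrite tau_high by (apply branch_hits_B; exact Hy). simpl; lra.
Qed.

Lemma branch_exists y : 0 < y < 1 -> exists j, in_branch j y.
Proof.
  intros Hy.
  assert (G : forall n, y < dyad n \/ exists j, in_branch j y).
  { induction n as [|n [H|H]]; [left; rewrite dyad_0; lra| |right; exact H].
    destruct (Rlt_or_le y (dyad (S n))) as [H'|H'];
      [left; exact H' | right; exists n; split; lra]. }
  destruct (exists_dyad_lt y ltac:(lra)) as [n Hn].
  destruct (G n) as [H|H]; [lra|exact H].
Qed.

Lemma tauB_range y : 0 <= y < 1 -> 0 <= tauB y < 1.
Proof.
  intros Hy. destruct (Req_dec y 0) as [->|Hn]; [rewrite tauB_0; lra|].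
  destruct (branch_exists y ltac:(lra)) as [j Hj].
  rewrite (tauB_on_branch j y Hj). pose proof (branch_hits_B j y Hj). simpl. lra.
Qed.

Lemma iter_tauB_range n x : 0 <= x < 1 -> 0 <= Nat.iter n tauB x < 1.
Proof.
  intros H. induction n as [|n IH]; simpl; [exact H|]. apply tauB_range, IH.
Qed.

Definition in_interval (p : R * R) (x : R) : Prop := fst p < x < snd p.

Definition in_union (L : list (R * R)) (x : R) : Prop :=
  exists p, In p L /\ in_interval p x.

Definition covers (L : list (R * R)) (E : R -> Prop) : Prop :=
  forall x, E x -> in_union L x.

Definition total (L : list (R * R)) : R :=
  fold_right (fun p acc => snd p - fst p + acc) 0 L.

Definition well_formed (L : list (R * R)) : Prop :=
  forall p, In p L -> fst p <= snd p.

Lemma total_app L1 L2 : total (L1 ++ L2) = total L1 + total L2.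
Proof. induction L1 as [|p L1 IH]; simpl; [lra|]. rewrite IH; lra. Qed.

Lemma well_formed_tail p L : well_formed (p :: L) -> well_formed L.
Proof. intros G q Hq. apply G; right; exact Hq. Qed.

Lemma total_nonneg L : well_formed L -> 0 <= total L.
Proof.
  induction L as [|p L IH]; simpl; intros G; [lra|].
  pose proof (G p (or_introl eq_refl)). pose proof (IH (well_formed_tail p L G)). lra.
Qed.

Lemma total_flat_map {A} (f : A -> list (R * R)) (l : list A) (c : R) :
  (forall a, In a l -> total (f a) <= c) ->
  total (flat_map f l) <= INR (length l) * c.
Proof.
  induction l as [|a l IH]; intros H; cbn [flat_map length]; [simpl; lra|].
  rewrite total_app, S_INR.
  assert (total (f a) <= c) by (apply H; left; auto).
  assert (total (flat_map f l) <= INR (length l) * c)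
    by (apply IH; intros; apply H; right; auto).
  lra.
Qed.

Lemma well_formed_flat_map {A} (f : A -> list (R * R)) (l : list A) :
  (forall a, In a l -> well_formed (f a)) -> well_formed (flat_map f l).
Proof.
  intros H p Hp. apply in_flat_map in Hp as [a [Ha Hp]]. exact (H a Ha p Hp).
Qed.

Lemma in_union_flat_map {A} (f : A -> list (R * R)) (l : list A) a x :
  In a l -> in_union (f a) x -> in_union (flat_map f l) x.
Proof.
  intros Ha [p [Hp Hx]]. exists p. split; [|exact Hx].
  apply in_flat_map. exists a. split; assumption.
Qed.

(* The inverse of tauB on the branch
   [2^-k, 2^-(k-1)) is z |-> (1 + z) 2^-k, which shrinks lengths by 2^-k.
   Points y < 2^-K are swallowed by one interval of length 2 2^-K; the
   remaining points of [0, 2 2^-M) lie on the branches k = M..K.  Hence the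
   preimage of a set with a cover of total length T gets a cover of total
   length at most 2 2^-K + 2 2^-M T: this is the invariance of Lebesgue
   measure under tauB, with a slight loss controlled by K. *)

Definition inv_branch (k : nat) (p : R * R) : R * R :=
  ((1 + fst p) * dyad k, (1 + snd p) * dyad k).

Definition pullback (M K : nat) (L : list (R * R)) : list (R * R) :=
  (- dyad K, dyad K) :: flat_map (fun k => map (inv_branch k) L) (seq M (S K - M)).

Lemma total_inv_branch k L : total (map (inv_branch k) L) = dyad k * total L.
Proof.
  induction L as [|p L IH]; simpl; [lra|]. rewrite IH. unfold inv_branch; simpl. ring.
Qed.

Lemma total_inv_branches L : well_formed L -> forall n M,
  total (flat_map (fun k => map (inv_branch k) L) (seq M n)) <= 2 * dyad M * total L.
Proof.
  intros G. pose proof (total_nonneg L G).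
  induction n as [|n IH]; intros M; simpl.
  - pose proof (dyad_pos M). nra.
  - rewrite total_app, total_inv_branch. specialize (IH (S M)).
    rewrite dyad_S in IH. lra.
Qed.

Lemma total_pullback M K L :
  well_formed L -> total (pullback M K L) <= 2 * dyad K + 2 * dyad M * total L.
Proof.
  intros G. unfold pullback. change (total (?p :: ?l)) with (snd p - fst p + total l).
  pose proof (total_inv_branches L G (S K - M) M). simpl fst; simpl snd. lra.
Qed.

Lemma well_formed_pullback M K L : well_formed L -> well_formed (pullback M K L).
Proof.
  intros G p [<-|Hp]; [simpl; pose proof (dyad_pos K); lra|].
  apply in_flat_map in Hp as [k [_ Hp]]. apply in_map_iff in Hp as [q [<- Hq]].
  unfold inv_branch; simpl. pose proof (G q Hq). pose proof (dyad_pos k). nra.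
Qed.

Lemma covers_pullback M K L F : (1 <= M)%nat -> covers L F ->
  covers (pullback M K L) (fun y => 0 <= y < 2 * dyad M /\ F (tauB y)).
Proof.
  intros HM C y [Hy HF].
  assert (Hcentral : y < dyad K -> in_union (pullback M K L) y).
  { intros HyK. exists (- dyad K, dyad K). split; [left; reflexivity|].
    unfold in_interval; simpl. lra. }
  destruct (Req_dec y 0) as [->|Hn]; [apply Hcentral; apply dyad_pos|].
  pose proof (twice_dyad_le_1 M HM).
  destruct (branch_exists y ltac:(lra)) as [j Hj].
  assert (HjM : (M <= S j)%nat).
  { destruct (Compare_dec.le_lt_dec M (S j)) as [l|l]; [exact l|].
    exfalso. assert (Hle : dyad M <= dyad (S (S j))) by (apply dyad_le; lia).
    destruct Hj as [Hj _]. rewrite (dyad_S (S j)) in Hle. lra. }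
  destruct (Compare_dec.le_lt_dec (S j) K) as [HK|HK].
  - destruct (C (tauB y) HF) as [p [Hp Hin]].
    exists (inv_branch (S j) p). split.
    + right. apply in_flat_map. exists (S j).
      split; [apply in_seq; lia | apply in_map; exact Hp].
    + unfold in_interval, inv_branch in *; simpl.
      rewrite (tauB_on_branch j y Hj) in Hin.
      assert (E : 2 ^ S j * dyad (S j) = 1).
      { rewrite pow2_mul_dyad, Nat.sub_diag by lia. apply dyad_0. }
      pose proof (dyad_pos (S j)). nra.
  - apply Hcentral. destruct Hj as [_ Hj].
    pose proof (dyad_le j K ltac:(lia)). lra.
Qed.

Definition pullback_iter (K r : nat) (L : list (R * R)) : list (R * R) :=
  Nat.iter r (pullback 1 K) L.

Lemma pullback_iter_spec K L F : well_formed L -> covers L F -> forall r,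
  well_formed (pullback_iter K r L) /\
  total (pullback_iter K r L) <= total L + INR r * (2 * dyad K) /\
  covers (pullback_iter K r L) (fun w => 0 <= w < 1 /\ F (Nat.iter r tauB w)).
Proof.
  intros G C. assert (Hd1 : 2 * dyad 1 = 1) by (unfold dyad; simpl; lra).
  induction r as [|r [G' [T' C']]].
  - simpl. split; [exact G|]. split; [lra|]. intros x [_ H]. apply C, H.
  - unfold pullback_iter. rewrite Nat.iter_succ. fold (pullback_iter K r L).
    split; [apply well_formed_pullback, G'|]. split.
    + pose proof (total_pullback 1 K _ G') as T1. rewrite Hd1 in T1. rewrite S_INR. lra.
    + intros x [Hx HF]. apply (covers_pullback 1 K _ _ (le_n 1) C').
      rewrite Hd1. split; [exact Hx|]. split; [apply tauB_range, Hx|].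
      rewrite <- Nat.iter_succ_r. exact HF.
Qed.

(* Quasi-independence of two visits to a small neighbourhood of 0.
   The event "tauB^i x and tauB^j x both lie in (0, 2^-M]" (i < j) is the
   preimage under tauB^i of [0, 2 2^-M) intersected with the preimage of
   (0, 2^-M] under tauB^(j-i); pulling back gives a cover of total length
   about (2 2^-M)^2, up to an error j 2 2^-K. *)

Definition near_zero (M : nat) (z : R) : Prop := 0 < z <= dyad M.

Definition pair_cover (K M i j : nat) : list (R * R) :=
  pullback_iter K i
    (pullback M K (pullback_iter K (j - i - 1) ((0, 2 * dyad M) :: nil))).

Lemma pair_cover_spec K M i j : (1 <= M)%nat -> (i < j)%nat ->
  well_formed (pair_cover K M i j) /\
  total (pair_cover K M i j) <= 4 * dyad M * dyad M + INR j * (2 * dyad K) /\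
  covers (pair_cover K M i j)
    (fun x => 0 <= x < 1 /\ near_zero M (Nat.iter i tauB x) /\
              near_zero M (Nat.iter j tauB x)).
Proof.
  intros HM Hij. set (r := (j - i - 1)%nat).
  pose proof (dyad_pos M) as HdM. pose proof (dyad_pos K) as HdK.
  assert (G0 : well_formed ((0, 2 * dyad M) :: nil))
    by (intros p [<-|[]]; simpl; lra).
  assert (C0 : covers ((0, 2 * dyad M) :: nil) (near_zero M)).
  { intros w Hw. exists (0, 2 * dyad M). split; [left; reflexivity|].
    destruct Hw. unfold in_interval; simpl. lra. }
  destruct (pullback_iter_spec K _ _ G0 C0 r) as [G1 [T1 C1]].
  pose proof (covers_pullback M K _ _ HM C1) as C2.
  pose proof (well_formed_pullback M K _ G1) as G2.
  pose proof (total_pullback M K _ G1) as T2.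
  destruct (pullback_iter_spec K _ _ G2 C2 i) as [G3 [T3 C3]].
  unfold pair_cover. fold r. split; [exact G3|]. split.
  - simpl total in T1.
    pose proof (twice_dyad_le_1 M HM). pose proof (pos_INR r).
    assert (Hj : INR j = 1 + INR r + INR i).
    { unfold r. replace j with (1 + (j - i - 1) + i)%nat at 1 by lia.
      rewrite !plus_INR. simpl. lra. }
    assert (2 * dyad M * (INR r * (2 * dyad K)) <= INR r * (2 * dyad K)).
    { pose proof (Rmult_le_pos (INR r) (2 * dyad K) ltac:(lra) ltac:(lra)). nra. }
    nra.
  - intros x [Hx [Hi Hj]]. apply C3. split; [exact Hx|].
    destruct Hi as [Hi1 Hi2]. split; [split; [lra|]|].
    + pose proof (twice_dyad_le_1 M HM). lra.
    + split; [apply tauB_range; pose proof (iter_tauB_range i x Hx); lra|].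
      rewrite <- Nat.iter_succ_r, <- Nat.iter_add.
      replace (S r + i)%nat with j by (unfold r; lia). exact Hj.
Qed.

Definition pairs_cover (K M P : nat) : list (R * R) :=
  flat_map (fun i => flat_map (fun j =>
    if Nat.ltb i j then pair_cover K M i j else nil) (seq 0 P)) (seq 0 P).

Lemma pairs_cover_spec K M P : (1 <= M)%nat ->
  well_formed (pairs_cover K M P) /\
  total (pairs_cover K M P)
    <= INR P * (INR P * (4 * dyad M * dyad M + INR P * (2 * dyad K))) /\
  covers (pairs_cover K M P)
    (fun x => 0 <= x < 1 /\ exists i j, (i < j < P)%nat /\
       near_zero M (Nat.iter i tauB x) /\ near_zero M (Nat.iter j tauB x)).
Proof.
  intros HM. split; [|split].
  - apply well_formed_flat_map. intros i _. apply well_formed_flat_map. intros j _.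
    destruct (Nat.ltb_spec i j) as [Hij|_];
      [apply (pair_cover_spec K M i j HM Hij) | intros p []].
  - unfold pairs_cover. eapply Rle_trans.
    { apply total_flat_map
        with (c := INR P * (4 * dyad M * dyad M + INR P * (2 * dyad K))).
      intros i _. eapply Rle_trans.
      { apply total_flat_map with (c := 4 * dyad M * dyad M + INR P * (2 * dyad K)).
        intros j Hj. apply in_seq in Hj.
        pose proof (dyad_pos K). pose proof (dyad_pos M).
        destruct (Nat.ltb_spec i j) as [Hij|_].
        - destruct (pair_cover_spec K M i j HM Hij) as [_ [T _]].
          assert (INR j <= INR P) by (apply le_INR; lia). nra.
        - simpl. pose proof (pos_INR P). nra. }
      rewrite length_seq; lra. }
    rewrite length_seq; lra.
  - intros x [Hx [i [j [Hij [Hi Hj]]]]].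
    destruct (pair_cover_spec K M i j HM ltac:(lia)) as [_ [_ C]].
    apply (in_union_flat_map _ _ i); [apply in_seq; lia|].
    apply (in_union_flat_map _ _ j); [apply in_seq; lia|].
    destruct (Nat.ltb_spec i j); [|lia]. apply C. auto.
Qed.

Lemma count_big_pos x t n : (1 <= count_big x t n)%nat ->
  exists i, (i < n)%nat /\ t <= IZR (beta (S i) x).
Proof.
  induction n as [|n IH]; simpl; intros H; [lia|].
  destruct (Rle_dec t (IZR (beta (S n) x))) as [Hb|Hb].
  - exists n. split; [lia|exact Hb].
  - destruct (IH ltac:(lia)) as [i [Hi Ht]]. exists i. split; [lia|exact Ht].
Qed.

Lemma count_big_two x t n : (2 <= count_big x t n)%nat ->
  exists i j, (i < j < n)%nat /\ t <= IZR (beta (S i) x) /\ t <= IZR (beta (S j) x).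
Proof.
  induction n as [|n IH]; simpl; intros H; [lia|].
  destruct (Rle_dec t (IZR (beta (S n) x))) as [Hb|Hb].
  - destruct (Compare_dec.le_lt_dec 2 (count_big x t n)) as [H2|H2].
    + destruct (IH H2) as [i [j [? ?]]]. exists i, j. split; [lia|auto].
    + destruct (count_big_pos x t n ltac:(lia)) as [i [? ?]].
      exists i, n. split; [lia|auto].
  - destruct (IH ltac:(lia)) as [i [j [? ?]]]. exists i, j. split; [lia|auto].
Qed.

Lemma large_digit_near_zero x i M : 0 <= x < 1 ->
  2 ^ M <= IZR (beta (S i) x) -> near_zero M (Nat.iter i tauB x).
Proof.
  intros Hx Hb. unfold beta, chi in Hb. replace (S i - 1)%nat with i in Hb by lia.
  pose proof (iter_tauB_range i x Hx). set (z := Nat.iter i tauB x) in *.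
  pose proof (pow2_pos M).
  destruct (Req_dec z 0) as [E|E].
  - rewrite E, Rinv_0, (Int_part_eq 0 0) in Hb by (simpl; lra). simpl in Hb. lra.
  - assert (Hz : 0 < z) by lra. split; [exact Hz|].
    destruct (base_Int_part (/ z)) as [Hl _].
    unfold dyad. rewrite <- (Rinv_inv z).
    apply Rinv_le_contravar; [exact (pow2_pos M)|lra].
Qed.

(* Dyadic blocks: s indexes J in [4^s, 4^(s+1))
   and J indexes n in [2^J, 2^(J+1)).  Then log n >= J log 2 >= 2^(2s-1), so
   (log n)^(3/4) >= 2^(gain s) with gain s ~ 3s/2, and t_n >= 2^(J + gain s). *)

Definition gain (s : nat) : nat := (s + s / 2 - 1)%nat.

Lemma gain_bounds s : (4 * gain s <= 3 * (2 * s - 1))%nat /\ (3 * s <= 2 * gain s + 3)%nat.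
Proof.
  unfold gain. pose proof (Nat.div_mod s 2 ltac:(lia)).
  pose proof (Nat.mod_upper_bound s 2 ltac:(lia)). lia.
Qed.

Lemma pow2_le_Rpower a b : (4 * a <= 3 * b)%nat -> 2 ^ a <= Rpower (2 ^ b) (3 / 4).
Proof.
  intros Hab. pose proof ln_lt_2.
  unfold Rpower. rewrite ln_pow by lra.
  rewrite <- (exp_ln (2 ^ a)) by apply pow2_pos. rewrite ln_pow by lra.
  apply le_INR in Hab. rewrite !mult_INR in Hab.
  replace (INR 4) with 4 in Hab by (simpl; lra).
  replace (INR 3) with 3 in Hab by (simpl; lra).
  assert (Hle : INR a * ln 2 <= 3 / 4 * (INR b * ln 2)).
  { assert (0 <= (3 * INR b - 4 * INR a) * ln 2) by (apply Rmult_le_pos; lra). lra. }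
  destruct Hle as [Hlt|Heq]; [left; apply exp_increasing, Hlt | rewrite Heq; lra].
Qed.

Lemma ln_lower_bound s J n : (1 <= s)%nat -> (4 ^ s <= J)%nat -> (2 ^ J <= n)%nat ->
  2 ^ (2 * s - 1) <= ln (INR n).
Proof.
  intros Hs HJ Hn. pose proof ln_lt_2. pose proof (pow2_pos J).
  assert (Hn' : 2 ^ J <= INR n) by (rewrite <- INR_pow2; apply le_INR, Hn).
  assert (HlnJ : INR J * ln 2 <= ln (INR n)).
  { rewrite <- ln_pow by lra. destruct Hn' as [H'|H'];
      [left; apply ln_increasing; auto | rewrite H'; lra]. }
  assert (HJ' : 2 * 2 ^ (2 * s - 1) <= INR J).
  { change (2 * 2 ^ (2 * s - 1)) with (2 ^ S (2 * s - 1)).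
    replace (S (2 * s - 1)) with (2 * s)%nat by lia.
    rewrite <- INR_pow2. apply le_INR. rewrite Nat.pow_mul_r. exact HJ. }
  pose proof (pow2_pos (2 * s - 1)). nra.
Qed.

Lemma threshold_lower_bound s J n : (1 <= s)%nat -> (4 ^ s <= J)%nat -> (2 ^ J <= n)%nat ->
  2 ^ (J + gain s) <= tn n.
Proof.
  intros Hs HJ Hn. pose proof (ln_lower_bound s J n Hs HJ Hn) as Hln.
  pose proof (pow2_pos (2 * s - 1)).
  assert (Hpow : 2 ^ gain s <= Rpower (ln (INR n)) (3 / 4)).
  { eapply Rle_trans; [apply pow2_le_Rpower, (proj1 (gain_bounds s))|].
    apply Rle_Rpower_l; [lra|split; lra]. }
  assert (HnJ : 2 ^ J <= INR n) by (rewrite <- INR_pow2; apply le_INR, Hn).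
  unfold tn. rewrite pow_add. pose proof (pow2_pos J). pose proof (pow2_pos (gain s)).
  apply Rmult_le_compat; lra.
Qed.

(* For each J in [4^s, 4^(s+1)) it contains the
   pairs cover for times below 2^(J+1), radius 2^-(J + gain s) and error
   scale 2^-(3J+3s+6).  Each J contributes about 2^(2J) 2^(-2J - 2 gain s),
   i.e. about 2^-(3s), and there are 3 4^s values of J: the block has total
   length O(2^-s). *)

Definition block_cover (s : nat) : list (R * R) :=
  flat_map (fun J => pairs_cover (3 * J + 3 * s + 6) (J + gain s) (2 ^ S J))
    (seq (4 ^ s) (3 * 4 ^ s)).

Lemma gain_ge_2 s : (3 <= s)%nat -> (2 <= gain s)%nat.
Proof.
  intros Hs. unfold gain. pose proof (Nat.div_mod s 2 ltac:(lia)).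
  pose proof (Nat.mod_upper_bound s 2 ltac:(lia)). lia.
Qed.

Lemma well_formed_block_cover s : (3 <= s)%nat -> well_formed (block_cover s).
Proof.
  intros Hs. apply well_formed_flat_map. intros J _.
  apply pairs_cover_spec. pose proof (gain_ge_2 s Hs). lia.
Qed.

Lemma total_pairs_cover_in_block s J : (3 <= s)%nat ->
  total (pairs_cover (3 * J + 3 * s + 6) (J + gain s) (2 ^ S J))
    <= 4 * dyad (2 * gain s - 2) + 2 * dyad (3 * s + 3).
Proof.
  intros Hs. set (m := gain s). assert (Hm : (2 <= m)%nat) by apply (gain_ge_2 s Hs).
  destruct (pairs_cover_spec (3 * J + 3 * s + 6) (J + m) (2 ^ S J) ltac:(lia))
    as [_ [T _]].
  eapply Rle_trans; [exact T|]. rewrite INR_pow2.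
  assert (E1 : 2 ^ S J * dyad (J + m) = dyad (m - 1))
    by (rewrite pow2_mul_dyad by lia; f_equal; lia).
  assert (E2 : 2 ^ S J * dyad (3 * J + 3 * s + 6) = dyad (2 * J + 3 * s + 5))
    by (rewrite pow2_mul_dyad by lia; f_equal; lia).
  assert (E3 : 2 ^ S J * dyad (2 * J + 3 * s + 5) = dyad (J + 3 * s + 4))
    by (rewrite pow2_mul_dyad by lia; f_equal; lia).
  assert (E4 : 2 ^ S J * dyad (J + 3 * s + 4) = dyad (3 * s + 3))
    by (rewrite pow2_mul_dyad by lia; f_equal; lia).
  assert (E5 : dyad (m - 1) * dyad (m - 1) = dyad (2 * m - 2))
    by (rewrite <- dyad_add; f_equal; lia).
  replace (2 ^ S J * (2 ^ S J * (4 * dyad (J + m) * dyad (J + m)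
             + 2 ^ S J * (2 * dyad (3 * J + 3 * s + 6)))))
    with (4 * ((2 ^ S J * dyad (J + m)) * (2 ^ S J * dyad (J + m)))
          + 2 * (2 ^ S J * (2 ^ S J * (2 ^ S J * dyad (3 * J + 3 * s + 6)))))
    by ring.
  rewrite E1, E2, E3, E4, E5. lra.
Qed.

Lemma total_block_cover s : (3 <= s)%nat -> total (block_cover s) <= 400 * dyad s.
Proof.
  intros Hs. unfold block_cover. eapply Rle_trans.
  { apply total_flat_map. intros J _. apply (total_pairs_cover_in_block s J Hs). }
  rewrite length_seq, mult_INR. replace (INR 3) with 3 by (simpl; lra).
  replace (4 ^ s)%nat with (2 ^ (2 * s))%nat by (rewrite Nat.pow_mul_r; reflexivity).
  rewrite INR_pow2.
  assert (A1 : 2 ^ (2 * s) * dyad (2 * gain s - 2) <= 2 ^ 5 * dyad s)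
    by (apply pow2_mul_dyad_le; pose proof (gain_bounds s); lia).
  assert (A2 : 2 ^ (2 * s) * dyad (3 * s + 3) <= 2 ^ 0 * dyad s)
    by (apply pow2_mul_dyad_le; lia).
  replace (2 ^ 5) with 32 in A1 by (simpl; lra).
  replace (2 ^ 0) with 1 in A2 by (simpl; lra). pose proof (dyad_pos s).
  lra.
Qed.

Lemma block_cover_catches s J n x : (3 <= s)%nat ->
  (4 ^ s <= J < 4 ^ S s)%nat -> (2 ^ J <= n < 2 ^ S J)%nat ->
  0 <= x < 1 -> (2 <= count_big x (tn n) n)%nat ->
  in_union (block_cover s) x.
Proof.
  intros Hs HJ Hn Hx Hc.
  destruct (count_big_two x (tn n) n Hc) as [i [j [Hij [Hi Hj]]]].
  pose proof (threshold_lower_bound s J n ltac:(lia) ltac:(lia) ltac:(lia)).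
  apply (in_union_flat_map _ _ J); [apply in_seq; simpl in HJ; lia|].
  apply pairs_cover_spec; [pose proof (gain_ge_2 s Hs); lia|].
  split; [exact Hx|]. exists i, j. split; [lia|].
  split; apply large_digit_near_zero; auto; lra.
Qed.

(* A sequence of finite interval lists
   C 0, C 1, ... is enumerated as one sequence of intervals by listing the
   blocks one after the other; each list is assumed nonempty, so that the
   k-th interval is already determined by the first k+1 blocks. *)

Section Enumeration.

Variable C : nat -> list (R * R).
Hypothesis C_nonempty : forall s, (1 <= length (C s))%nat.

Definition blocks_prefix (n : nat) : list (R * R) := concat (map C (seq 0 n)).

Lemma blocks_prefix_S n : blocks_prefix (S n) = blocks_prefix n ++ C n.
Proof.
  unfold blocks_prefix. rewrite seq_S, map_app, concat_app. simpl.
  rewrite app_nil_r. reflexivity.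
Qed.

Lemma blocks_prefix_extends n n' : (n <= n')%nat ->
  exists r, blocks_prefix n' = blocks_prefix n ++ r.
Proof.
  induction 1 as [|m _ [r Hr]]; [exists nil; rewrite app_nil_r; reflexivity|].
  exists (r ++ C m). rewrite blocks_prefix_S, Hr, app_assoc. reflexivity.
Qed.

Lemma blocks_prefix_length n : (n <= length (blocks_prefix n))%nat.
Proof.
  induction n as [|n IH]; [simpl; lia|].
  rewrite blocks_prefix_S, length_app. pose proof (C_nonempty n). lia.
Qed.

Lemma total_blocks_prefix N :
  total (blocks_prefix (S N)) = sum_f_R0 (fun s => total (C s)) N.
Proof.
  induction N as [|N IH]; rewrite blocks_prefix_S, total_app; [simpl; lra|].
  rewrite IH. simpl. lra.
Qed.

Lemma well_formed_blocks_prefix n :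
  (forall s, well_formed (C s)) -> well_formed (blocks_prefix n).
Proof.
  intros G p Hp. apply in_concat in Hp as [l [Hl Hp]].
  apply in_map_iff in Hl as [s [<- _]]. exact (G s p Hp).
Qed.

Definition enum_intervals (k : nat) : R * R := nth k (blocks_prefix (S k)) (0, 0).

Lemma enum_intervals_stable N k : (k <= N)%nat ->
  enum_intervals k = nth k (blocks_prefix (S N)) (0, 0).
Proof.
  intros Hk. unfold enum_intervals.
  destruct (blocks_prefix_extends (S k) (S N) ltac:(lia)) as [r ->].
  rewrite app_nth1; [reflexivity|]. pose proof (blocks_prefix_length (S k)). lia.
Qed.

Lemma enum_intervals_onto s p : In p (C s) -> exists k, enum_intervals k = p.
Proof.
  intros Hp. destruct (In_nth _ _ (0, 0) Hp) as [q [Hq Hqp]].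
  set (k := (length (blocks_prefix s) + q)%nat). exists k.
  rewrite (enum_intervals_stable k k (le_n k)).
  pose proof (blocks_prefix_length s).
  destruct (blocks_prefix_extends (S s) (S k) ltac:(unfold k; lia)) as [r ->].
  rewrite blocks_prefix_S, <- app_assoc, app_nth2 by (unfold k; lia).
  replace (k - length (blocks_prefix s))%nat with q by (unfold k; lia).
  rewrite app_nth1 by exact Hq. exact Hqp.
Qed.

End Enumeration.

Lemma sum_lengths_nth_le W : well_formed W -> forall N,
  sum_f_R0 (fun k => snd (nth k W (0, 0)) - fst (nth k W (0, 0))) N <= total W.
Proof.
  induction W as [|p W IH]; intros G N.
  - rewrite (sum_eq _ (fun _ => 0)) by (intros [|i] _; simpl; lra).
    rewrite sum_cte. simpl. lra.
  - pose proof (G p (or_introl eq_refl)).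
    pose proof (total_nonneg W (well_formed_tail p W G)).
    destruct N as [|N]; [simpl; lra|].
    rewrite decomp_sum by lia. simpl pred.
    specialize (IH (well_formed_tail p W G) N). simpl in IH |- *. lra.
Qed.

Lemma null_of_list_covers (E : R -> Prop) :
  (forall eps, 0 < eps -> exists C : nat -> list (R * R),
     (forall s, well_formed (C s)) /\
     (forall x, E x -> exists s, in_union (C s) x) /\
     (forall N, sum_f_R0 (fun s => total (C s)) N <= eps)) ->
  lebesgue_null E.
Proof.
  intros Hcov eps Heps. destruct (Hcov eps Heps) as [C [G [Hx Htot]]].
  (* Pad each list with an empty interval so that all lists are nonempty. *)
  set (D := fun s => (0, 0) :: C s).
  assert (Dne : forall s, (1 <= length (D s))%nat) by (intros; simpl; lia).
  assert (DG : forall s, well_formed (D s)) by (intros s p [<-|Hp]; [simpl; lra|apply (G s p Hp)]).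
  exists (fun k => fst (enum_intervals D k)), (fun k => snd (enum_intervals D k)).
  split; [|split].
  - intros k. unfold enum_intervals.
    destruct (nth_in_or_default k (blocks_prefix D (S k)) (0, 0)) as [H|H];
      [apply (well_formed_blocks_prefix D _ DG _ H) | rewrite H; simpl; lra].
  - intros x Ex. destruct (Hx x Ex) as [s [p [Hp Hin]]].
    destruct (enum_intervals_onto D Dne s p (or_intror Hp)) as [k Hk].
    exists k. rewrite Hk. exact Hin.
  - intros N.
    rewrite (sum_eq _ (fun k => snd (nth k (blocks_prefix D (S N)) (0, 0))
                                - fst (nth k (blocks_prefix D (S N)) (0, 0))))
      by (intros i Hi; rewrite (enum_intervals_stable D Dne N i Hi); reflexivity).
    eapply Rle_trans; [apply sum_lengths_nth_le, well_formed_blocks_prefix, DG|].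
    rewrite total_blocks_prefix.
    rewrite (sum_eq _ (fun s => total (C s))) by (intros; simpl; lra).
    apply Htot.
Qed.

Lemma borel_cantelli_covers (E : R -> Prop) (C : nat -> list (R * R)) (c : R) :
  (forall s, well_formed (C s)) ->
  (forall s, total (C s) <= c * dyad s) ->
  (forall x, E x -> forall s0, exists s, (s0 <= s)%nat /\ in_union (C s) x) ->
  lebesgue_null E.
Proof.
  intros G Htot Hio. apply null_of_list_covers. intros eps Heps.
  assert (Hc : 0 <= c)
    by (pose proof (total_nonneg _ (G 0%nat)); pose proof (Htot 0%nat); rewrite dyad_0 in *; lra).
  destruct (exists_dyad_lt (eps / (2 * c + 1)) ltac:(apply Rdiv_lt_0_compat; lra))
    as [s0 Hs0].
  exists (fun s => C (s0 + s)%nat). split; [|split].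
  - intros s. apply G.
  - intros x Ex. destruct (Hio x Ex s0) as [s [Hs Hin]].
    exists (s - s0)%nat. replace (s0 + (s - s0))%nat with s by lia. exact Hin.
  - intros N. eapply Rle_trans.
    { apply sum_Rle with (Bn := fun s => c * dyad (s0 + s)). intros s _. apply Htot. }
    eapply Rle_trans; [apply dyad_geom_sum, Hc|].
    assert (Hlt : dyad s0 * (2 * c + 1) < eps).
    { apply (Rmult_lt_compat_r (2 * c + 1)) in Hs0; [|lra].
      unfold Rdiv in Hs0. rewrite Rmult_assoc, Rinv_l, Rmult_1_r in Hs0 by lra. exact Hs0. }
    pose proof (dyad_pos s0). nra.
Qed.

Lemma dyadic_block_of n s0 : (2 ^ (4 ^ s0) <= n)%nat ->
  exists s J, (s0 <= s)%nat /\ (4 ^ s <= J < 4 ^ S s)%nat /\ (2 ^ J <= n < 2 ^ S J)%nat.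
Proof.
  intros Hn.
  assert (Hpos : (0 < n)%nat) by (pose proof (Nat.pow_nonzero 2 (4 ^ s0) ltac:(lia)); lia).
  set (J := Nat.log2 n). pose proof (Nat.log2_spec n Hpos) as HJn. fold J in HJn.
  assert (HJ : (4 ^ s0 <= J)%nat).
  { pose proof (Nat.log2_le_mono _ _ Hn) as H. rewrite Nat.log2_pow2 in H by lia. exact H. }
  assert (HJpos : (0 < J)%nat) by (pose proof (Nat.pow_nonzero 4 s0 ltac:(lia)); lia).
  set (L := Nat.log2 J). pose proof (Nat.log2_spec J HJpos) as HLJ. fold L in HLJ.
  assert (E4 : forall t, (4 ^ t = 2 ^ (2 * t))%nat) by (intros; rewrite Nat.pow_mul_r; reflexivity).
  pose proof (Nat.div_mod L 2 ltac:(lia)) as HLdiv.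
  pose proof (Nat.mod_upper_bound L 2 ltac:(lia)) as HLmod.
  exists (L / 2)%nat, J. split; [|split; [|exact HJn]].
  - assert (HL : (Nat.log2 (4 ^ s0) <= L)%nat) by (apply Nat.log2_le_mono, HJ).
    rewrite E4, Nat.log2_pow2 in HL by lia. lia.
  - rewrite !E4. split.
    + eapply Nat.le_trans; [|apply HLJ]. apply Nat.pow_le_mono_r; lia.
    + eapply Nat.lt_le_trans; [apply HLJ|]. apply Nat.pow_le_mono_r; lia.
Qed.

Theorem mainTheorem12 :
  lebesgue_null
    (fun x => 0 <= x < 1 /\
       forall N : nat, exists n : nat,
         (N <= n)%nat /\ (2 <= count_big x (tn n) n)%nat).
Proof.
  apply (borel_cantelli_covers _ (fun s => block_cover (s + 3)) 400).
  - intros s. apply well_formed_block_cover. lia.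
  - intros s. eapply Rle_trans; [apply total_block_cover; lia|].
    pose proof (dyad_le (s + 3) s ltac:(lia)). lra.
  - intros x [Hx Hbad] s0.
    destruct (Hbad (2 ^ (4 ^ (s0 + 3)))%nat) as [n [Hn Hcount]].
    destruct (dyadic_block_of n (s0 + 3) Hn) as [s [J [Hs [HJ HnJ]]]].
    exists (s - 3)%nat. split; [lia|]. replace (s - 3 + 3)%nat with s by lia.
    exact (block_cover_catches s J n x ltac:(lia) HJ HnJ Hx Hcount).
Qed.
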